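(* Let $\alpha,\beta\in(0,1]$, and let $L(t,u,v,w):\mathbb{T}^\kappa\times\mathbb{R}^3\to\mathbb{R}$ have continuous second-order partial derivatives in $(u,v,w)$. Consider the problem $$\mathcal{L}(y)=\int_a^bL\bigl(t,y(\sigma(t)),({}_a\Delta_h^\alpha y)(t),({}_h\Delta_b^\beta y)(t)\bigr)\Delta t\to\min,\qquad y(a)=A,\ y(b)=B,$$ over $y:\mathbb{T}\to\mathbb{R}$. If $\hat y$ is a local minimizer, then for all $t\in\mathbb{T}^{\kappa^2}$, $$L_u[\hat y](t)+\bigl({}_h\Delta_{\rho(b)}^{\alpha}L_v[\hat y]\bigr)(t)+\bigl({}_a\Delta_h^{\beta}L_w[\hat y]\bigr)(t)=0,$$ where $[y](s)=(s,y(\sigma(s)),({}_a\Delta_h^\alpha y)(s),({}_h\Delta_b^\beta y)(s))$ and $L_v[\hat y]$, $L_w[\hat y]$ are the functions $s\mapsto L_v([\hat y](s))$, $s\mapsto L_w([\hat y](s))$ on $\mathbb{T}^\kappa$.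
   Context: Let $a\in\mathbb{R}$, $h>0$, $b=a+kh$ with $k\in\mathbb{N}$, $k\ge2$, $\mathbb{T}=\{a,a+h,\dots,b\}$, $\mathbb{T}^\kappa=\mathbb{T}\setminus\{b\}$, $\mathbb{T}^{\kappa^2}=\mathbb{T}\setminus\{b-h,b\}$, $\sigma(t)=t+h$, $\rho(t)=t-h$, $G^\Delta(t)=(G(t+h)-G(t))/h$; $\int_c^dG(s)\Delta s:=h\sum_{j=0}^{(d-c)/h-1}G(c+jh)$ for $c\le d$. $h$-factorial: $x_h^{(y)}:=h^y\Gamma(\frac{x}{h}+1)/\Gamma(\frac{x}{h}+1-y)$ (division at a pole yields zero). For $\nu\ge0$, $c\in\mathbb{T}$, $G$ on $\{s\in\mathbb{T}:s\le c\}$, $t\le c$: $({}_a\Delta_h^{-\nu}G)(t+\nu h):=h^\nu G(t)+\frac{\nu}{\Gamma(\nu+1)}\int_a^t(t+\nu h-\sigma(s))_h^{(\nu-1)}G(s)\Delta s$ and $({}_h\Delta_c^{-\nu}G)(t-\nu h):=h^\nu G(t)+\frac{\nu}{\Gamma(\nu+1)}\int_{\sigma(t)}^{\sigma(c)}(s+\nu h-\sigma(t))_h^{(\nu-1)}G(s)\Delta s$. For $0<\alpha\le1$, $\gamma=1-\alpha$, $t<c$: $({}_a\Delta_h^{\alpha}G)(t):=[\tau\mapsto({}_a\Delta_h^{-\gamma}G)(\tau+\gamma h)]^\Delta(t)$, $({}_h\Delta_c^{\alpha}G)(t):=-[\tau\mapsto({}_h\Delta_c^{-\gamma}G)(\tau-\gamma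 h)]^\Delta(t)$. Norm: $\|y\|=\max_{t\in\mathbb{T}^\kappa}|y(\sigma(t))|+\max_{t\in\mathbb{T}^\kappa}|({}_a\Delta_h^\alpha y)(t)|+\max_{t\in\mathbb{T}^\kappa}|({}_h\Delta_b^\beta y)(t)|$. $\hat y$ with $\hat y(a)=A$, $\hat y(b)=B$ is a local minimizer if for some $\delta>0$, $\mathcal{L}(\hat y)\le\mathcal{L}(y)$ for all $y$ with $y(a)=A$, $y(b)=B$, $\|y-\hat y\|<\delta$. *)

From Stdlib Require Import Reals Lra ZArith ClassicalEpsilon.
Open Scope R_scope.

Fixpoint rsum (n : nat) (f : nat -> R) : R :=
  match n with O => 0 | S m => rsum m f + f m end.
Fixpoint rprod (n : nat) (f : nat -> R) : R :=
  match n with O => 1 | S m => rprod m f * f m end.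
Fixpoint rmaxabs (n : nat) (f : nat -> R) : R :=
  match n with O => 0 | S m => Rmax (rmaxabs m f) (Rabs (f m)) end.

(* ---------- Euler Gamma function (Gauss limit formula) ----------
   Gamma x = lim_n n! n^x / (x (x+1) ... (x+n)), which converges for every
   x that is not a non-positive integer. *)
Definition gauss_seq (x : R) (n : nat) : R :=
  INR (fact n) * Rpower (INR n) x / rprod (S n) (fun j => x + INR j).
Definition Gamma (x : R) : R :=
  epsilon (inhabits 0) (fun l => Un_cv (gauss_seq x) l).

(* ---------- h-factorial ----------
   x_h^(y) = h^y Gamma(x/h+1) / Gamma(x/h+1-y); zero when x/h+1-y is a pole
   (a non-positive integer) of Gamma. *)
Definition hfact (h x y : R) : R :=
  if excluded_middle_informative (exists m : nat, x / h + 1 - y = - INR m)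
  then 0
  else Rpower h y * Gamma (x / h + 1) / Gamma (x / h + 1 - y).

(* ---------- delta integral on hZ ----------
   int_c^d G(s) Δs = h * sum_{j=0}^{(d-c)/h - 1} G(c + j h)   (c <= d on the lattice) *)
Definition nsteps (h c d : R) : nat := Z.to_nat (Int_part ((d - c) / h)).
Definition dint (h c d : R) (G : R -> R) : R :=
  h * rsum (nsteps h c d) (fun j => G (c + INR j * h)).

(* ---------- fractional sums ----------
   lsum a h nu G t  :=  (_a Δ_h^{-nu} G)(t + nu h)
   rsum_c c h nu G t :=  (_h Δ_c^{-nu} G)(t - nu h) *)
Definition lfsum (a h nu : R) (G : R -> R) (t : R) : R :=
  Rpower h nu * G t
  + nu / Gamma (nu + 1) *
    dint h a t (fun s => hfact h (t + nu * h - (s + h)) (nu - 1) * G s).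
Definition rfsum (c h nu : R) (G : R -> R) (t : R) : R :=
  Rpower h nu * G t
  + nu / Gamma (nu + 1) *
    dint h (t + h) (c + h) (fun s => hfact h (s + nu * h - (t + h)) (nu - 1) * G s).

(* ---------- fractional differences (0 < alpha <= 1, gamma = 1 - alpha) ---------- *)
(* left:  (_a Δ_h^alpha G)(t) = [tau |-> (_aΔ_h^{-gamma} G)(tau + gamma h)]^Δ(t) *)
Definition ldiff (a h alpha : R) (G : R -> R) (t : R) : R :=
  (lfsum a h (1 - alpha) G (t + h) - lfsum a h (1 - alpha) G t) / h.
(* right: (_h Δ_c^alpha G)(t) = - [tau |-> (_hΔ_c^{-gamma} G)(tau - gamma h)]^Δ(t) *)
Definition rdiff (c h alpha : R) (G : R -> R) (t : R) : R :=
  - ((rfsum c h (1 - alpha) G (t + h) - rfsum c h (1 - alpha) G t) / h).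

(* ---------- the functional and the norm ----------
   T = {a, a+h, ..., b}, b = a + k h;  T^kappa = {a + i h : i < k}. *)
Definition functionalL (a h : R) (k : nat) (alpha beta : R)
    (L : R -> R -> R -> R -> R) (y : R -> R) : R :=
  let b := a + INR k * h in
  dint h a b (fun t => L t (y (t + h)) (ldiff a h alpha y t) (rdiff b h beta y t)).

Definition normT (a h : R) (k : nat) (alpha beta : R) (y : R -> R) : R :=
  let b := a + INR k * h in
  rmaxabs k (fun i => y (a + INR i * h + h))
  + rmaxabs k (fun i => ldiff a h alpha y (a + INR i * h))
  + rmaxabs k (fun i => rdiff b h beta y (a + INR i * h)).

Definition local_minimizer (a h : R) (k : nat) (alpha beta A B : R)
    (L : R -> R -> R -> R -> R) (yh : R -> R) : Prop :=
  let b := a + INR k * h in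
  yh a = A /\ yh b = B /\
  exists delta, delta > 0 /\
    forall y : R -> R, y a = A -> y b = B ->
      normT a h k alpha beta (fun s => y s - yh s) < delta ->
      functionalL a h k alpha beta L yh <= functionalL a h k alpha beta L y.

Definition has_partials3 (F Fu Fv Fw : R -> R -> R -> R) : Prop :=
  forall u v w,
    derivable_pt_lim (fun x => F x v w) u (Fu u v w) /\
    derivable_pt_lim (fun x => F u x w) v (Fv u v w) /\
    derivable_pt_lim (fun x => F u v x) w (Fw u v w).

Definition continuous3 (F : R -> R -> R -> R) : Prop :=
  forall u v w eps, eps > 0 -> exists d, d > 0 /\
    forall u' v' w', Rabs (u' - u) < d -> Rabs (v' - v) < d -> Rabs (w' - w) < d ->
      Rabs (F u' v' w' - F u v w) < eps.

Definition C2_3 (F Fu Fv Fw : R -> R -> R -> R) : Prop :=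
  has_partials3 F Fu Fv Fw /\
  forall G, (G = Fu \/ G = Fv \/ G = Fw) ->
    exists Gu Gv Gw, has_partials3 G Gu Gv Gw /\
      continuous3 Gu /\ continuous3 Gv /\ continuous3 Gw.

(* On the lattice every fractional sum is a finite kernel sum
   [Σ_j frac_kernel(n, j) G(t_j)], the right sum using the transposed kernel;
   hence the left and right fractional differences are adjoint to each other
   under summation ("fractional summation by parts").  The functional is
   differentiable along every line [yh + e eta]: each summand is a C^2
   function of three variables composed with an affine map of [e], and
   continuous partials give total differentiability.  At a local minimizer
   the derivative in [e] (the first variation) therefore vanishes for every
   [eta] vanishing at [a] and [b] (Fermat's rule; the norm is homogeneous).
   Choosing for [eta] the indicator of the lattice point [t_(i+1)] and
   transposing the differences yields the Euler–Lagrange equation at [t_i]. *)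

From Stdlib Require Import Reals Lra Lia ZArith FunctionalExtensionality.
Open Scope R_scope.

Lemma rsum_ext n f g : (forall j, (j < n)%nat -> f j = g j) -> rsum n f = rsum n g.
Proof.
  induction n as [|n IH]; intros Hfg; simpl; [reflexivity|].
  rewrite IH by (intros; apply Hfg; lia). rewrite Hfg by lia. reflexivity.
Qed.

Lemma rsum_lincomb n f g x y :
  rsum n (fun j => x * f j + y * g j) = x * rsum n f + y * rsum n g.
Proof. induction n as [|n IH]; simpl; [ring | rewrite IH; ring]. Qed.

Lemma rsum_plus n f g : rsum n (fun j => f j + g j) = rsum n f + rsum n g.
Proof. induction n as [|n IH]; simpl; [ring | rewrite IH; ring]. Qed.

Lemma rsum_scal n f c : rsum n (fun j => c * f j) = c * rsum n f.
Proof. induction n as [|n IH]; simpl; [ring | rewrite IH; ring]. Qed.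

Lemma rsum_zero n f : (forall j, (j < n)%nat -> f j = 0) -> rsum n f = 0.
Proof.
  induction n as [|n IH]; intros Hf; simpl; [reflexivity|].
  rewrite IH by (intros; apply Hf; lia). rewrite Hf by lia. ring.
Qed.

Lemma rsum_split m p f : rsum (m + p) f = rsum m f + rsum p (fun i => f (m + i)%nat).
Proof.
  induction p as [|p IH]; simpl; [rewrite Nat.add_0_r; ring|].
  rewrite Nat.add_succ_r. simpl. rewrite IH. ring.
Qed.

Lemma rsum_delta N q f : (q < N)%nat ->
  rsum N (fun s => f s * (if Nat.eq_dec s q then 1 else 0)) = f q.
Proof.
  induction N as [|N IH]; intros Hq; [lia|]. simpl.
  destruct (Nat.eq_dec N q) as [->|Hne].
  - rewrite rsum_zero; [ring|]. intros j Hj. destruct (Nat.eq_dec j q); [lia | ring].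
  - rewrite IH by lia. ring.
Qed.

Lemma nsteps_lattice h x y m : h > 0 -> y - x = INR m * h -> nsteps h x y = m.
Proof.
  intros Hh E. unfold nsteps.
  replace ((y - x) / h) with (INR m) by (rewrite E; field; lra).
  unfold Int_part. rewrite <- (tech_up (INR m) (Z.of_nat m + 1)).
  - replace (Z.of_nat m + 1 - 1)%Z with (Z.of_nat m) by ring. apply Nat2Z.id.
  - rewrite plus_IZR, <- INR_IZR_INZ. simpl. lra.
  - rewrite plus_IZR, <- INR_IZR_INZ. simpl. lra.
Qed.

(* The kernel of the fractional sum of order [nu] on the lattice:
   [(aΔ^{-nu} G)(t_n + nu h) = Σ_j frac_kernel h nu n j * G(t_j)], with
   [t_j = a + j h]. *)
Definition frac_kernel (h nu : R) (n j : nat) : R :=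
  if Nat.eq_dec n j then Rpower h nu
  else if lt_dec j n
       then nu / Gamma (nu + 1) * h * hfact h ((INR n - INR j - 1 + nu) * h) (nu - 1)
       else 0.

Lemma frac_kernel_shift h nu n j : frac_kernel h nu (S n) (S j) = frac_kernel h nu n j.
Proof.
  unfold frac_kernel.
  destruct (Nat.eq_dec (S n) (S j)), (Nat.eq_dec n j); try lia; [reflexivity|].
  destruct (lt_dec (S j) (S n)), (lt_dec j n); try lia; [|reflexivity].
  rewrite !S_INR. do 2 f_equal. ring.
Qed.

Lemma frac_kernel_diag h nu n : frac_kernel h nu n n = Rpower h nu.
Proof. unfold frac_kernel. destruct (Nat.eq_dec n n); [reflexivity | lia]. Qed.

Lemma lfsum_lattice a h nu G n N : h > 0 -> (n < N)%nat ->
  lfsum a h nu G (a + INR n * h)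
  = rsum N (fun j => frac_kernel h nu n j * G (a + INR j * h)).
Proof.
  intros Hh HN. unfold lfsum, dint.
  rewrite (nsteps_lattice h a (a + INR n * h) n) by (auto; ring).
  replace N with (S n + (N - S n))%nat by lia.
  rewrite rsum_split, (rsum_zero (N - S n)).
  2:{ intros j Hj. unfold frac_kernel.
      destruct (Nat.eq_dec n (S n + j)); [lia|]. destruct (lt_dec (S n + j) n); [lia | ring]. }
  change (rsum (S n) ?f) with (rsum n f + f n). cbv beta.
  rewrite frac_kernel_diag.
  rewrite (rsum_ext n (fun j => frac_kernel h nu n j * G (a + INR j * h))
    (fun j => nu / Gamma (nu + 1) * h *
       (hfact h (a + INR n * h + nu * h - (a + INR j * h + h)) (nu - 1) * G (a + INR j * h)))).
  { rewrite rsum_scal. ring. }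
  intros j Hj. unfold frac_kernel.
  destruct (Nat.eq_dec n j); [lia|]. destruct (lt_dec j n); [|lia].
  replace (a + INR n * h + nu * h - (a + INR j * h + h)) with ((INR n - INR j - 1 + nu) * h)
    by ring. ring.
Qed.

Lemma rfsum_lattice a h nu c G n M : h > 0 -> c + h = a + INR M * h -> (n < M)%nat ->
  rfsum c h nu G (a + INR n * h)
  = rsum M (fun s => frac_kernel h nu s n * G (a + INR s * h)).
Proof.
  intros Hh Hc HM. unfold rfsum, dint.
  rewrite (nsteps_lattice h (a + INR n * h + h) (c + h) (M - S n)).
  2: exact Hh.
  2:{ rewrite Hc, minus_INR, S_INR by lia. ring. }
  replace M with (S n + (M - S n))%nat at 2 by lia.
  rewrite rsum_split. change (rsum (S n) ?f) with (rsum n f + f n). cbv beta.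
  rewrite (rsum_zero n), frac_kernel_diag.
  2:{ intros j Hj. unfold frac_kernel.
      destruct (Nat.eq_dec j n); [lia|]. destruct (lt_dec n j); [lia | ring]. }
  rewrite (rsum_ext (M - S n) (fun i => frac_kernel h nu (S n + i) n * G (a + INR (S n + i) * h))
    (fun i => nu / Gamma (nu + 1) * h *
       (hfact h (a + INR n * h + h + INR i * h + nu * h - (a + INR n * h + h)) (nu - 1)
        * G (a + INR n * h + h + INR i * h)))).
  { rewrite rsum_scal. ring. }
  intros j Hj. unfold frac_kernel.
  destruct (Nat.eq_dec (S n + j) n); [lia|]. destruct (lt_dec n (S n + j)); [|lia].
  rewrite plus_INR, S_INR.
  replace (a + INR n * h + h + INR j * h + nu * h - (a + INR n * h + h))
    with ((INR n + 1 + INR j - INR n - 1 + nu) * h) by ring.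
  replace (a + (INR n + 1 + INR j) * h) with (a + INR n * h + h + INR j * h) by ring.
  ring.
Qed.

Lemma ldiff_lattice a h al G n N : h > 0 -> (S n < N)%nat ->
  ldiff a h al G (a + INR n * h)
  = (rsum N (fun j => frac_kernel h (1 - al) (S n) j * G (a + INR j * h))
     - rsum N (fun j => frac_kernel h (1 - al) n j * G (a + INR j * h))) / h.
Proof.
  intros Hh HN. unfold ldiff.
  replace (a + INR n * h + h) with (a + INR (S n) * h) by (rewrite S_INR; ring).
  rewrite !(lfsum_lattice a h (1 - al) G _ N) by (auto; lia). reflexivity.
Qed.

Lemma rdiff_lattice a h al c G n M : h > 0 -> c + h = a + INR M * h -> (S n < M)%nat ->
  rdiff c h al G (a + INR n * h)
  = - ((rsum M (fun s => frac_kernel h (1 - al) s (S n) * G (a + INR s * h))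
        - rsum M (fun s => frac_kernel h (1 - al) s n * G (a + INR s * h))) / h).
Proof.
  intros Hh Hc HN. unfold rdiff.
  replace (a + INR n * h + h) with (a + INR (S n) * h) by (rewrite S_INR; ring).
  rewrite !(rfsum_lattice a h (1 - al) c G _ M) by (auto; lia). reflexivity.
Qed.

Lemma lfsum_lincomb a h nu f g x y t :
  lfsum a h nu (fun s => x * f s + y * g s) t = x * lfsum a h nu f t + y * lfsum a h nu g t.
Proof.
  unfold lfsum, dint.
  rewrite (rsum_ext _ _ (fun j =>
      x * (hfact h (t + nu * h - (a + INR j * h + h)) (nu - 1) * f (a + INR j * h))
    + y * (hfact h (t + nu * h - (a + INR j * h + h)) (nu - 1) * g (a + INR j * h))))
    by (intros; ring).
  rewrite rsum_lincomb. ring.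
Qed.

Lemma rfsum_lincomb c h nu f g x y t :
  rfsum c h nu (fun s => x * f s + y * g s) t = x * rfsum c h nu f t + y * rfsum c h nu g t.
Proof.
  unfold rfsum, dint.
  rewrite (rsum_ext _ _ (fun j =>
      x * (hfact h (t + h + INR j * h + nu * h - (t + h)) (nu - 1) * f (t + h + INR j * h))
    + y * (hfact h (t + h + INR j * h + nu * h - (t + h)) (nu - 1) * g (t + h + INR j * h))))
    by (intros; ring).
  rewrite rsum_lincomb. ring.
Qed.

Lemma ldiff_lincomb a h al f g x y t :
  ldiff a h al (fun s => x * f s + y * g s) t = x * ldiff a h al f t + y * ldiff a h al g t.
Proof. unfold ldiff. rewrite !lfsum_lincomb. unfold Rdiv. ring. Qed.

Lemma rdiff_lincomb c h al f g x y t :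
  rdiff c h al (fun s => x * f s + y * g s) t = x * rdiff c h al f t + y * rdiff c h al g t.
Proof. unfold rdiff. rewrite !rfsum_lincomb. unfold Rdiv. ring. Qed.

(* The indicator of the lattice point [t_q = a + q h]: the variations used to
   localize the first variation. *)
Definition lattice_indicator (a h : R) (q : nat) (s : R) : R :=
  if Req_EM_T s (a + INR q * h) then 1 else 0.

Lemma lattice_indicator_at a h q x : h > 0 ->
  lattice_indicator a h q (a + INR x * h) = if Nat.eq_dec x q then 1 else 0.
Proof.
  intros Hh. unfold lattice_indicator.
  destruct (Req_EM_T _ _) as [E|E], (Nat.eq_dec x q) as [e|e]; auto.
  - exfalso. apply e, INR_eq, Rmult_eq_reg_r with h; lra.
  - subst. lra.
Qed.

Lemma rsum_indicator a h q N f : h > 0 -> (q < N)%nat ->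
  rsum N (fun s => f s * lattice_indicator a h q (a + INR s * h)) = f q.
Proof.
  intros Hh Hq.
  rewrite (rsum_ext N _ (fun s => f s * (if Nat.eq_dec s q then 1 else 0)))
    by (intros; rewrite lattice_indicator_at; auto).
  apply rsum_delta, Hq.
Qed.

Lemma ldiff_indicator a h al q j : h > 0 ->
  ldiff a h al (lattice_indicator a h q) (a + INR j * h)
  = (frac_kernel h (1 - al) (S j) q - frac_kernel h (1 - al) j q) / h.
Proof.
  intros Hh. rewrite (ldiff_lattice a h al _ j (S (S j) + q)) by (auto; lia).
  rewrite !rsum_indicator by (auto; lia). reflexivity.
Qed.

Lemma rdiff_indicator a h al c M q j :
  h > 0 -> c + h = a + INR M * h -> (S j < M)%nat -> (q < M)%nat ->
  rdiff c h al (lattice_indicator a h q) (a + INR j * h)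
  = - ((frac_kernel h (1 - al) q (S j) - frac_kernel h (1 - al) q j) / h).
Proof.
  intros Hh Hc Hj Hq. rewrite (rdiff_lattice a h al c _ j M) by auto.
  rewrite !rsum_indicator by (auto; lia). reflexivity.
Qed.

(* Discrete fractional summation by parts, tested against the indicator of
   [t_(m+1)]: the shift, the left difference and the right difference are
   transposed respectively into evaluation at [t_m], the right difference
   with end point [b - h], and the left difference. *)
Lemma rsum_shift_indicator a h k m U : h > 0 -> (m < k)%nat ->
  rsum k (fun j => lattice_indicator a h (S m) (a + INR j * h + h) * U (a + INR j * h))
  = U (a + INR m * h).
Proof.
  intros Hh Hm.
  rewrite (rsum_ext k _ (fun j => U (a + INR j * h) * (if Nat.eq_dec j m then 1 else 0))).
  - exact (rsum_delta k m (fun j => U (a + INR j * h)) Hm).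
  - intros j _.
    replace (a + INR j * h + h) with (a + INR (S j) * h) by (rewrite S_INR; ring).
    rewrite lattice_indicator_at by exact Hh.
    destruct (Nat.eq_dec (S j) (S m)), (Nat.eq_dec j m); try lia; ring.
Qed.

Lemma rsum_ldiff_indicator a h k al m V : h > 0 -> (S m < k)%nat ->
  rsum k (fun j => ldiff a h al (lattice_indicator a h (S m)) (a + INR j * h) * V (a + INR j * h))
  = rdiff (a + INR k * h - h) h al V (a + INR m * h).
Proof.
  intros Hh Hm. rewrite (rdiff_lattice a h al _ V m k) by (auto; ring).
  rewrite (rsum_ext k _ (fun j =>
      / h * (frac_kernel h (1 - al) j m * V (a + INR j * h))
    + - / h * (frac_kernel h (1 - al) j (S m) * V (a + INR j * h)))).
  - rewrite rsum_lincomb. unfold Rdiv. ring.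
  - intros j _. rewrite ldiff_indicator, frac_kernel_shift by exact Hh. unfold Rdiv. ring.
Qed.

Lemma rsum_rdiff_indicator a h k be m W : h > 0 -> (S m < k)%nat ->
  rsum k (fun j => rdiff (a + INR k * h) h be (lattice_indicator a h (S m)) (a + INR j * h)
                   * W (a + INR j * h))
  = ldiff a h be W (a + INR m * h).
Proof.
  intros Hh Hm. rewrite (ldiff_lattice a h be W m k) by auto.
  rewrite (rsum_ext k _ (fun j =>
      / h * (frac_kernel h (1 - be) (S m) j * W (a + INR j * h))
    + - / h * (frac_kernel h (1 - be) m j * W (a + INR j * h)))).
  - rewrite rsum_lincomb. unfold Rdiv. ring.
  - intros j Hj. rewrite (rdiff_indicator a h be _ (S k)) by (auto; try lia; rewrite S_INR; ring).
    rewrite frac_kernel_shift. unfold Rdiv. ring.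
Qed.

Lemma mvt_increment f f' x dx : (forall c, derivable_pt_lim f c (f' c)) ->
  exists c, Rabs (c - x) <= Rabs dx /\ f (x + dx) - f x = f' c * dx.
Proof.
  intros Hd. destruct (Rtotal_order dx 0) as [Hlt|[->|Hgt]].
  - destruct (MVT_cor2 f f' (x + dx) x ltac:(lra) (fun c _ => Hd c)) as [c [E Hc]].
    exists c. split; [rewrite !Rabs_left by lra; lra | lra].
  - exists x. rewrite Rplus_0_r, Rminus_diag, Rabs_R0. split; [lra | ring].
  - destruct (MVT_cor2 f f' x (x + dx) ltac:(lra) (fun c _ => Hd c)) as [c [E Hc]].
    exists c. split; [rewrite !Rabs_right by lra; lra | lra].
Qed.

Lemma derivable_remainder f x l : derivable_pt_lim f x l ->
  forall eps, eps > 0 -> exists d, d > 0 /\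
    forall dx, Rabs dx < d -> Rabs (f (x + dx) - f x - dx * l) <= eps * Rabs dx.
Proof.
  intros Hd eps He. destruct (Hd eps He) as [d Hdd].
  exists d. split; [apply cond_pos|]. intros dx Hdx.
  destruct (Req_dec dx 0) as [->|Hne].
  - rewrite Rplus_0_r, Rabs_R0. replace (f x - f x - 0 * l) with 0 by ring.
    rewrite Rabs_R0. lra.
  - replace (f (x + dx) - f x - dx * l) with (dx * ((f (x + dx) - f x) / dx - l))
      by (field; exact Hne).
    rewrite Rabs_mult, Rmult_comm.
    apply Rmult_le_compat_r; [apply Rabs_pos | left; apply Hdd; auto].
Qed.

Definition differentiable3_at (F Fu Fv Fw : R -> R -> R -> R) (u v w : R) : Prop :=
  forall eps, eps > 0 -> exists d, d > 0 /\
    forall x y z, Rabs x < d -> Rabs y < d -> Rabs z < d ->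
      Rabs (F (u + x) (v + y) (w + z) - F u v w
            - (x * Fu u v w + y * Fv u v w + z * Fw u v w))
      <= eps * (Rabs x + Rabs y + Rabs z).

(* The increment is split along
   the coordinate directions; the [v]- and [w]-steps use the mean value
   theorem and the continuity of [Fv], [Fw]. *)
Lemma partials_differentiable F Fu Fv Fw :
  has_partials3 F Fu Fv Fw -> continuous3 Fv -> continuous3 Fw ->
  forall u v w, differentiable3_at F Fu Fv Fw u v w.
Proof.
  intros HP Cv Cw u v w eps He.
  destruct (derivable_remainder _ _ _ (proj1 (HP u v w)) eps He) as [d1 [Hd1 Bu]].
  destruct (Cv u v w eps He) as [d2 [Hd2 Bv]].
  destruct (Cw u v w eps He) as [d3 [Hd3 Bw]].
  pose proof (Rmin_l d1 (Rmin d2 d3)); pose proof (Rmin_r d1 (Rmin d2 d3)).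
  pose proof (Rmin_l d2 d3); pose proof (Rmin_r d2 d3).
  exists (Rmin d1 (Rmin d2 d3)). split; [repeat apply Rmin_pos; lra|].
  intros x y z Hx Hy Hz.
  destruct (mvt_increment (fun s => F (u + x) s w) (fun s => Fv (u + x) s w) v y)
    as [c2 [Hc2 E2]]; [intro c; apply (HP (u + x) c w)|].
  destruct (mvt_increment (fun s => F (u + x) (v + y) s) (fun s => Fw (u + x) (v + y) s) w z)
    as [c3 [Hc3 E3]]; [intro c; apply (HP (u + x) (v + y) c)|].
  cbv beta in E2, E3.
  assert (Ru : Rabs (F (u + x) v w - F u v w - x * Fu u v w) <= eps * Rabs x)
    by (apply Bu; lra).
  assert (Rv : Rabs (Fv (u + x) c2 w - Fv u v w) <= eps).
  { left. apply Bv; replace (u + x - u) with x by ring; rewrite ?Rminus_diag, ?Rabs_R0; lra. }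
  assert (Rw : Rabs (Fw (u + x) (v + y) c3 - Fw u v w) <= eps).
  { left. apply Bw; replace (u + x - u) with x by ring; replace (v + y - v) with y by ring; lra. }
  replace (F (u + x) (v + y) (w + z) - F u v w - (x * Fu u v w + y * Fv u v w + z * Fw u v w))
    with ((F (u + x) v w - F u v w - x * Fu u v w)
          + y * (Fv (u + x) c2 w - Fv u v w) + z * (Fw (u + x) (v + y) c3 - Fw u v w))
    by lra.
  pose proof (Rabs_triang (F (u + x) v w - F u v w - x * Fu u v w
                           + y * (Fv (u + x) c2 w - Fv u v w))
                          (z * (Fw (u + x) (v + y) c3 - Fw u v w))).
  pose proof (Rabs_triang (F (u + x) v w - F u v w - x * Fu u v w)
                          (y * (Fv (u + x) c2 w - Fv u v w))).
  rewrite !Rabs_mult in *.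
  pose proof (Rabs_pos y); pose proof (Rabs_pos z).
  assert (Rabs y * Rabs (Fv (u + x) c2 w - Fv u v w) <= Rabs y * eps) by (apply Rmult_le_compat_l; lra).
  assert (Rabs z * Rabs (Fw (u + x) (v + y) c3 - Fw u v w) <= Rabs z * eps) by (apply Rmult_le_compat_l; lra).
  lra.
Qed.

Lemma Rabs_mult_le x y X Y : Rabs x <= X -> Rabs y <= Y -> Rabs (x * y) <= X * Y.
Proof. intros. rewrite Rabs_mult. apply Rmult_le_compat; auto; apply Rabs_pos. Qed.

Lemma differentiable_continuous F Fu Fv Fw :
  (forall u v w, differentiable3_at F Fu Fv Fw u v w) -> continuous3 F.
Proof.
  intros HD u v w eps He.
  set (M := Rabs (Fu u v w) + Rabs (Fv u v w) + Rabs (Fw u v w) + 1).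
  assert (HM : M > 0)
    by (unfold M; pose proof (Rabs_pos (Fu u v w)); pose proof (Rabs_pos (Fv u v w));
        pose proof (Rabs_pos (Fw u v w)); lra).
  destruct (HD u v w 1 Rlt_0_1) as [d [Hd B]].
  set (del := Rmin d (eps / (3 * M))).
  assert (Hdel : 0 < del) by (apply Rmin_pos; [lra | apply Rdiv_lt_0_compat; lra]).
  assert (HdelM : del * M <= eps / 3).
  { apply Rle_trans with (eps / (3 * M) * M).
    - apply Rmult_le_compat_r; [lra | apply Rmin_r].
    - right. field. lra. }
  exists del. split; [exact Hdel|]. intros u' v' w' Hu Hv Hw.
  assert (del <= d) by apply Rmin_l.
  specialize (B (u' - u) (v' - v) (w' - w) ltac:(lra) ltac:(lra) ltac:(lra)).
  replace (u + (u' - u)) with u' in B by ring.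
  replace (v + (v' - v)) with v' in B by ring.
  replace (w + (w' - w)) with w' in B by ring.
  pose proof (Rabs_mult_le (u' - u) (Fu u v w) del (Rabs (Fu u v w)) ltac:(lra) (Rle_refl _)).
  pose proof (Rabs_mult_le (v' - v) (Fv u v w) del (Rabs (Fv u v w)) ltac:(lra) (Rle_refl _)).
  pose proof (Rabs_mult_le (w' - w) (Fw u v w) del (Rabs (Fw u v w)) ltac:(lra) (Rle_refl _)).
  pose proof (Rabs_triang ((u' - u) * Fu u v w + (v' - v) * Fv u v w) ((w' - w) * Fw u v w)).
  pose proof (Rabs_triang ((u' - u) * Fu u v w) ((v' - v) * Fv u v w)).
  pose proof (Rabs_triang (F u' v' w' - F u v w
                 - ((u' - u) * Fu u v w + (v' - v) * Fv u v w + (w' - w) * Fw u v w))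
               ((u' - u) * Fu u v w + (v' - v) * Fv u v w + (w' - w) * Fw u v w)).
  replace (F u' v' w' - F u v w
           - ((u' - u) * Fu u v w + (v' - v) * Fv u v w + (w' - w) * Fw u v w)
           + ((u' - u) * Fu u v w + (v' - v) * Fv u v w + (w' - w) * Fw u v w))
    with (F u' v' w' - F u v w) in * by ring.
  assert (0 <= del * (Rabs (Fu u v w) + Rabs (Fv u v w) + Rabs (Fw u v w))).
  { apply Rmult_le_pos; [lra|]. unfold M in HM.
    pose proof (Rabs_pos (Fu u v w)); pose proof (Rabs_pos (Fv u v w));
    pose proof (Rabs_pos (Fw u v w)); lra. }
  unfold M in HdelM. lra.
Qed.

Lemma directional_derivative F Fu Fv Fw u v w p q r :
  differentiable3_at F Fu Fv Fw u v w ->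
  derivable_pt_lim (fun e => F (u + e * p) (v + e * q) (w + e * r)) 0
    (p * Fu u v w + q * Fv u v w + r * Fw u v w).
Proof.
  intros HD eps He.
  set (S := Rabs p + Rabs q + Rabs r + 1).
  assert (HS : S > 0)
    by (unfold S; pose proof (Rabs_pos p); pose proof (Rabs_pos q); pose proof (Rabs_pos r); lra).
  destruct (HD (eps / (2 * S)) ltac:(apply Rdiv_lt_0_compat; lra)) as [d [Hd B]].
  assert (HdS : 0 < d / S) by (apply Rdiv_lt_0_compat; lra).
  exists (mkposreal _ HdS). simpl. intros e He0 Hes.
  assert (Hsmall : forall c, Rabs c < S -> Rabs (e * c) < d).
  { intros c Hc. rewrite Rabs_mult.
    apply Rle_lt_trans with (d / S * Rabs c).
    - apply Rmult_le_compat_r; [apply Rabs_pos | lra].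
    - apply Rlt_le_trans with (d / S * S); [apply Rmult_lt_compat_l; lra | right; field; lra]. }
  pose proof (Rabs_pos p); pose proof (Rabs_pos q); pose proof (Rabs_pos r).
  specialize (B (e * p) (e * q) (e * r)
                (Hsmall p ltac:(unfold S; lra)) (Hsmall q ltac:(unfold S; lra))
                (Hsmall r ltac:(unfold S; lra))).
  rewrite Rplus_0_l, !Rmult_0_l, !Rplus_0_r.
  set (rem := F (u + e * p) (v + e * q) (w + e * r) - F u v w
              - (e * p * Fu u v w + e * q * Fv u v w + e * r * Fw u v w)) in B.
  assert (Hrem : Rabs rem <= eps / 2 * Rabs e).
  { apply Rle_trans with (1 := B). rewrite !Rabs_mult.
    replace (eps / 2 * Rabs e) with (eps / (2 * S) * (Rabs e * S)) by (field; lra).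
    apply Rmult_le_compat_l; [left; apply Rdiv_lt_0_compat; lra|].
    unfold S. pose proof (Rabs_pos e). nra. }
  replace ((F (u + e * p) (v + e * q) (w + e * r) - F u v w) / e
           - (p * Fu u v w + q * Fv u v w + r * Fw u v w)) with (rem / e)
    by (unfold rem; field; exact He0).
  assert (Hae : Rabs e > 0) by (apply Rabs_pos_lt, He0).
  unfold Rdiv. rewrite Rabs_mult, Rabs_inv.
  apply Rle_lt_trans with (eps / 2 * Rabs e * / Rabs e).
  - apply Rmult_le_compat_r; [left; apply Rinv_0_lt_compat, Hae | exact Hrem].
  - replace (eps / 2 * Rabs e * / Rabs e) with (eps / 2) by (field; lra). lra.
Qed.

Lemma C2_3_partials_continuous F Fu Fv Fw : C2_3 F Fu Fv Fw ->
  forall G, (G = Fu \/ G = Fv \/ G = Fw) -> continuous3 G.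
Proof.
  intros [_ HG] G HGe. destruct (HG G HGe) as [Gu [Gv [Gw [HP [_ [Cv Cw]]]]]].
  apply (differentiable_continuous G Gu Gv Gw), partials_differentiable; assumption.
Qed.

Lemma C2_3_directional_derivative F Fu Fv Fw u v w p q r : C2_3 F Fu Fv Fw ->
  derivable_pt_lim (fun e => F (u + e * p) (v + e * q) (w + e * r)) 0
    (p * Fu u v w + q * Fv u v w + r * Fw u v w).
Proof.
  intros HC. apply directional_derivative, partials_differentiable.
  - exact (proj1 HC).
  - apply (C2_3_partials_continuous F Fu Fv Fw HC). auto.
  - apply (C2_3_partials_continuous F Fu Fv Fw HC). auto.
Qed.

Lemma derivable_pt_lim_rsum n G D x :
  (forall j, (j < n)%nat -> derivable_pt_lim (G j) x (D j)) ->
  derivable_pt_lim (fun e => rsum n (fun j => G j e)) x (rsum n D).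
Proof.
  induction n as [|n IH]; intros HG; simpl.
  - exact (derivable_pt_lim_const 0 x).
  - apply (derivable_pt_lim_plus (fun e => rsum n (fun j => G j e)) (G n)).
    + apply IH. intros j Hj. apply HG. lia.
    + apply HG. lia.
Qed.

Lemma local_min_derivative_zero F D d : d > 0 ->
  (forall e, Rabs e < d -> F 0 <= F e) -> derivable_pt_lim F 0 D -> D = 0.
Proof.
  intros Hd Hmin HF.
  change D with (derive_pt F 0 (exist _ D HF)).
  apply (deriv_minimum F (- d) d); [lra | lra|].
  intros e H1 H2. apply Hmin. unfold Rabs. destruct (Rcase_abs e); lra.
Qed.

Definition along_path (a h : R) (k : nat) (al be : R) (y : R -> R)
    (F : R -> R -> R -> R -> R) (s : R) : R :=
  F s (y (s + h)) (ldiff a h al y s) (rdiff (a + INR k * h) h be y s).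

Definition first_variation (a h : R) (k : nat) (al be : R)
    (Lu Lv Lw : R -> R -> R -> R -> R) (y eta : R -> R) : R :=
  h * rsum k (fun j =>
      eta (a + INR j * h + h) * along_path a h k al be y Lu (a + INR j * h)
    + ldiff a h al eta (a + INR j * h) * along_path a h k al be y Lv (a + INR j * h)
    + rdiff (a + INR k * h) h be eta (a + INR j * h) * along_path a h k al be y Lw (a + INR j * h)).

Lemma functionalL_as_sum a h k al be L y : h > 0 ->
  functionalL a h k al be L y = h * rsum k (fun j => along_path a h k al be y L (a + INR j * h)).
Proof.
  intros Hh. unfold functionalL, dint, along_path.
  rewrite (nsteps_lattice h a (a + INR k * h) k) by (auto; ring). reflexivity.
Qed.

Lemma first_variation_derivative a h k al be L Lu Lv Lw y eta : h > 0 ->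
  (forall i : nat, (i < k)%nat ->
     C2_3 (L (a + INR i * h)) (Lu (a + INR i * h)) (Lv (a + INR i * h)) (Lw (a + INR i * h))) ->
  derivable_pt_lim (fun e => functionalL a h k al be L (fun s => y s + e * eta s)) 0
    (first_variation a h k al be Lu Lv Lw y eta).
Proof.
  intros Hh HC.
  apply (derivable_pt_lim_ext (fun e => h * rsum k (fun j =>
    L (a + INR j * h)
      (y (a + INR j * h + h) + e * eta (a + INR j * h + h))
      (ldiff a h al y (a + INR j * h) + e * ldiff a h al eta (a + INR j * h))
      (rdiff (a + INR k * h) h be y (a + INR j * h)
       + e * rdiff (a + INR k * h) h be eta (a + INR j * h))))).
  { intros e. rewrite functionalL_as_sum by exact Hh. f_equal.
    apply rsum_ext. intros j _. unfold along_path.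
    replace (fun s => y s + e * eta s) with (fun s => 1 * y s + e * eta s)
      by (extensionality s; ring).
    rewrite ldiff_lincomb, rdiff_lincomb, !Rmult_1_l. reflexivity. }
  apply derivable_pt_lim_scal, derivable_pt_lim_rsum.
  intros j Hj. apply C2_3_directional_derivative, HC, Hj.
Qed.

Lemma rmaxabs_scal n f e : rmaxabs n (fun i => e * f i) = Rabs e * rmaxabs n f.
Proof.
  induction n as [|n IH]; simpl; [ring|].
  rewrite IH, Rabs_mult, RmaxRmult; [reflexivity | apply Rabs_pos].
Qed.

Lemma rmaxabs_nonneg n f : 0 <= rmaxabs n f.
Proof.
  induction n as [|n IH]; simpl; [lra|].
  apply Rle_trans with (rmaxabs n f); [exact IH | apply Rmax_l].
Qed.

Lemma normT_scal a h k al be g e :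
  normT a h k al be (fun s => e * g s) = Rabs e * normT a h k al be g.
Proof.
  assert (Hl : forall t, ldiff a h al (fun s => e * g s) t = e * ldiff a h al g t).
  { intros t. replace (fun s => e * g s) with (fun s => e * g s + 0 * g s)
      by (extensionality s; ring).
    rewrite ldiff_lincomb. ring. }
  assert (Hr : forall c t, rdiff c h be (fun s => e * g s) t = e * rdiff c h be g t).
  { intros c t. replace (fun s => e * g s) with (fun s => e * g s + 0 * g s)
      by (extensionality s; ring).
    rewrite rdiff_lincomb. ring. }
  unfold normT.
  replace (fun i => ldiff a h al (fun s => e * g s) (a + INR i * h))
    with (fun i => e * ldiff a h al g (a + INR i * h)) by (extensionality i; auto).
  replace (fun i => rdiff (a + INR k * h) h be (fun s => e * g s) (a + INR i * h))
    with (fun i => e * rdiff (a + INR k * h) h be g (a + INR i * h)) by (extensionality i; auto).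
  rewrite !rmaxabs_scal. ring.
Qed.

Lemma normT_nonneg a h k al be g : 0 <= normT a h k al be g.
Proof.
  unfold normT.
  pose proof (rmaxabs_nonneg k (fun i => g (a + INR i * h + h))).
  pose proof (rmaxabs_nonneg k (fun i => ldiff a h al g (a + INR i * h))).
  pose proof (rmaxabs_nonneg k (fun i => rdiff (a + INR k * h) h be g (a + INR i * h))).
  lra.
Qed.

(* At a local minimizer the first variation vanishes in every direction
   [eta] vanishing at the end points: [e ↦ L(yh + e eta)] is admissible and
   close to [yh] for small [e], so it has a local minimum at [e = 0]. *)
Lemma minimizer_first_variation a h k al be A B L Lu Lv Lw yh eta : h > 0 ->
  (forall i : nat, (i < k)%nat ->
     C2_3 (L (a + INR i * h)) (Lu (a + INR i * h)) (Lv (a + INR i * h)) (Lw (a + INR i * h))) ->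
  local_minimizer a h k al be A B L yh ->
  eta a = 0 -> eta (a + INR k * h) = 0 ->
  first_variation a h k al be Lu Lv Lw yh eta = 0.
Proof.
  intros Hh HC [HA [HB [d [Hd Hmin]]]] Hea Heb.
  set (N := normT a h k al be eta).
  assert (HN : 0 <= N) by apply normT_nonneg.
  apply (local_min_derivative_zero
           (fun e => functionalL a h k al be L (fun s => yh s + e * eta s)) _ (d / (N + 1))).
  - apply Rdiv_lt_0_compat; lra.
  - intros e He. cbv beta.
    replace (fun s => yh s + 0 * eta s) with yh by (extensionality s; ring).
    apply Hmin.
    + rewrite Hea. lra.
    + cbv zeta. rewrite Heb. lra.
    + replace (fun s => yh s + e * eta s - yh s) with (fun s => e * eta s)
        by (extensionality s; ring).
      rewrite normT_scal. fold N.
      apply Rle_lt_trans with (d / (N + 1) * N).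
      * apply Rmult_le_compat_r; lra.
      * apply Rlt_le_trans with (d / (N + 1) * (N + 1)).
        -- apply Rmult_lt_compat_l; [apply Rdiv_lt_0_compat |]; lra.
        -- right. field. lra.
  - apply first_variation_derivative; assumption.
Qed.

Lemma lattice_indicator_off a h q x : h > 0 -> x <> q ->
  lattice_indicator a h q (a + INR x * h) = 0.
Proof.
  intros Hh Hx. rewrite lattice_indicator_at by exact Hh.
  destruct (Nat.eq_dec x q); [contradiction | reflexivity].
Qed.

Theorem mainTheorem11
  (a h : R) (k : nat) (alpha beta A B : R)
  (L Lu Lv Lw : R -> R -> R -> R -> R) (yh : R -> R) :
  h > 0 -> (2 <= k)%nat ->
  0 < alpha <= 1 -> 0 < beta <= 1 ->
  (forall i : nat, (i < k)%nat ->
     C2_3 (L (a + INR i * h)) (Lu (a + INR i * h)) (Lv (a + INR i * h)) (Lw (a + INR i * h))) ->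
  local_minimizer a h k alpha beta A B L yh ->
  let b := a + INR k * h in
  let ext := fun (F : R -> R -> R -> R -> R) (s : R) =>
      F s (yh (s + h)) (ldiff a h alpha yh s) (rdiff b h beta yh s) in
  forall i : nat, (i + 2 <= k)%nat ->
    let t := a + INR i * h in
    ext Lu t + rdiff (b - h) h alpha (ext Lv) t + ldiff a h beta (ext Lw) t = 0.
Proof.
  intros Hh _ _ _ HC Hmin b ext i Hi t.
  set (eta := lattice_indicator a h (S i)).
  assert (Hea : eta a = 0).
  { pose proof (lattice_indicator_off a h (S i) 0 Hh ltac:(lia)) as E.
    rewrite Rmult_0_l, Rplus_0_r in E. exact E. }
  assert (Heb : eta b = 0) by (apply lattice_indicator_off; [exact Hh | lia]).
  pose proof (minimizer_first_variation a h k alpha beta A B L Lu Lv Lw yh eta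
                Hh HC Hmin Hea Heb) as Hvar.
  unfold first_variation in Hvar. rewrite !rsum_plus in Hvar.
  unfold eta in Hvar.
  rewrite rsum_shift_indicator, rsum_ldiff_indicator, rsum_rdiff_indicator in Hvar
    by (exact Hh || lia).
  apply Rmult_integral in Hvar. destruct Hvar as [Hh0 | Hvar]; [lra | exact Hvar].
Qed.
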